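(* Let $k\in\mathbb{N}$ and $t\in(0,1)$, and let $A_{\infty,k,t}$ be the matrix defined in the context, with first row $(a_0,a_1,a_2,\ldots)$. Then, as identities of formal Laurent/power series in $s$ (equivalently, of convergent series for $|s|$ small and positive), $$\mathcal S(A_{\infty,k,t})(s)=\frac{1+ts}{s\bigl(1+(1-t)\sum_{j=1}^{k+1}(-s)^j\bigr)},\qquad \mathcal D(A_{\infty,k,t})(s,\lambda)=\frac{1+(1-t)\sum_{j=1}^{k+1}s^j}{1+s(\lambda-t)+\lambda(1-t)\sum_{j=2}^{k+2}s^j}.$$
   Context: For $x\in\mathbb R$, $x_+=\max\{x,0\}$. For $k\in\mathbb N$ and $t\in(0,1)$, $A_{\infty,k,t}=(A(i,j))_{i,j\ge1}$ is the infinite Toeplitz Hessenberg matrix with $A(i,j)=a_{j-i}$ for $j\ge i$, $A(i+1,i)=1$, and $A(i,j)=0$ for $i\ge j+2$, where the sequence $(a_0,a_1,\ldots)$ is the unique one for which the leading principal minors satisfy $d_n:=\det A(\{1,\dots,n\})=t^{(n-k-1)_+}$ for all $n\in\mathbb N$ (uniqueness holds because, via Laplace expansion along the first row, $d_n=\sum_{j=1}^n(-1)^{j-1}a_{j-1}d_{n-j}$ with $d_0=1$, a triangular system in the $a_j$). For an infinite Toeplitz matrix $T=(\tau(i-j))_{i,j}$, its symbol is the Laurent series $\mathcal S(T)(s)=\sum_{j=-\infty}^{\infty}\tau(-j)s^j$ (so here $\mathcal S(A_{\infty,k,t})(s)=s^{-1}+\sum_{m\ge0}a_ms^m$), and $\mathcal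 D(T)(s,\lambda)=\sum_{j\ge0}D_j(\lambda)s^j$ with $D_0=1$ and $D_j(\lambda)=\det(T(\{1,\dots,j\})-\lambda I_j)$ for $j\ge1$, where $T(\{1,\dots,j\})$ is the leading principal $j\times j$ submatrix. *)

From mathcomp Require Import all_boot all_order all_algebra.
Set Implicit Arguments. Unset Strict Implicit. Unset Printing Implicit Defensive.
Import Order.TTheory GRing.Theory Num.Theory.
Local Open Scope ring_scope.

(* Leading principal n x n submatrix of the infinite Toeplitz Hessenberg matrix
   with first row (a_0, a_1, ...): entry (i,j) (0-based) is a_{j-i} for j >= i,
   1 for i = j+1, and 0 for i >= j+2. *)
Definition hessA (R : ringType) (a : nat -> R) (n : nat) : 'M[R]_n :=
  \matrix_(i < n, j < n)
    (if (i <= j)%N then a (j - i)%N else if i == j.+1 :> nat then 1 else 0).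

(* Coefficients of s * S(A)(s) where S(A)(s) = s^{-1} + sum_{m>=0} a_m s^m:
   coefficient 0 is 1 and coefficient m+1 is a_m. *)
Definition sym_shift (R : ringType) (a : nat -> R) (n : nat) : R :=
  if n is m.+1 then a m else 1.

Definition Dcoef (R : comRingType) (a : nat -> R) (lam : R) (j : nat) : R :=
  if j is j'.+1 then \det (hessA a j'.+1 - lam%:M) else 1.

Definition cauchy (R : ringType) (c : nat -> R) (p : {poly R}) (n : nat) : R :=
  \sum_(i < n.+1) c i * p`_(n - i).

From mathcomp Require Import all_boot all_order all_algebra.
From mathcomp Require Import ring.
Import Order.TTheory GRing.Theory Num.Theory.
Local Open Scope ring_scope.
Set Implicit Arguments. Unset Strict Implicit.

(* Write Q(s) = 1 + (1 - t) (s + ... + s^(k+1)).  The prescribed minors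
   d_n = t^(n-k-1)_+ have generating function D(s) = Q(s) / (1 - t s).
   Laplace expansion along the first row of a Hessenberg matrix says that D is
   the reciprocal of sigma(s) = s S(-s), hence s S(s) = sigma(-s) = (1 + t s) / Q(-s).
   Subtracting lambda I only replaces a_0 by a_0 - lambda, i.e. sigma by
   sigma + lambda s, so D(s, lambda) = 1 / (sigma(s) + lambda s)
   = Q(s) / (1 - t s + lambda s Q(s)).  These identities of formal power series
   are checked on truncations modulo s^N. *)

Section Truncation.
Variable R : comNzRingType.
Implicit Types (p q : {poly R}) (c d : nat -> R).

Lemma take_polyMl N p q : take_poly N (take_poly N p * q) = take_poly N (p * q).
Proof.
by rewrite -{2}(poly_take_drop N p) mulrDl take_polyD mulrAC take_polyMXn_0 addr0.
Qed.

Lemma take_polyMr N p q : take_poly N (p * take_poly N q) = take_poly N (p * q).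
Proof. by rewrite mulrC take_polyMl mulrC. Qed.

Lemma coef_poly_mul N c d i : (i < N)%N ->
  (\poly_(j < N) c j * \poly_(j < N) d j)`_i = \sum_(j < i.+1) c j * d (i - j)%N.
Proof.
move=> ltiN; rewrite coefM; apply: eq_bigr => j _.
rewrite !coef_poly (leq_ltn_trans (leq_subr j i) ltiN).
by rewrite (leq_ltn_trans _ ltiN) // -ltnS.
Qed.

Lemma cauchy_coefM c p n : cauchy c p n = (\poly_(j < n.+1) c j * p)`_n.
Proof. by rewrite coefM; apply: eq_bigr => j _; rewrite coef_poly ltn_ord. Qed.

Lemma coef_sum_Xn m n i : (\sum_(m <= j < n) 'X^j : {poly R})`_i = ((m <= i < n)%N)%:R.
Proof.
rewrite coef_sum (eq_bigr (fun j => ((j == i)%:R : R))) => [|j _]; last first.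
  by rewrite coefXn eq_sym.
rewrite -natr_sum -big_mkcond /= sum1_count count_uniq_mem ?iota_uniq //.
by rewrite mem_index_iota.
Qed.

Lemma coef_comp_polyNX p i : (p \Po - 'X)`_i = (-1) ^+ i * p`_i.
Proof.
elim/poly_ind: p i => [|p c IH] i; first by rewrite comp_poly0 !coef0 mulr0.
rewrite comp_polyD comp_polyM comp_polyX comp_polyC !coefD !coefC mulrN coefN.
rewrite !coefMX; case: i => [|i] /=; first by rewrite oppr0 expr0 !mul1r.
by rewrite IH exprS addr0; ring.
Qed.

End Truncation.

Section HessenbergMinors.
Variables (R : comNzRingType) (a : nat -> R).

Definition hessA_top (b : nat -> R) (n : nat) : 'M[R]_n :=
  \matrix_(i < n, j < n) (if i == 0 :> nat then b j else hessA a n i j).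

Lemma hessA_topE n : hessA_top a n = hessA a n.
Proof. by apply/matrixP=> i j; rewrite !mxE; case: i => [[|i]] //= _; rewrite subn0. Qed.

Lemma det_hessA_top n b :
  \det (hessA_top b n.+1) = \sum_(j < n.+1) (-1) ^+ j * b j * \det (hessA a (n - j)).
Proof.
elim: n b => [|n IH] b.
  by rewrite det_mx11 big_ord1 !mxE det_mx00 expr0 mul1r mulr1.
rewrite (expand_det_col _ ord0) big_ord_recl big_ord_recl big1 ?addr0 /cofactor; last first.
  by move=> i _; rewrite !mxE /= /bump /= mul0r.
have -> : row' ord0 (col' ord0 (hessA_top b n.+2)) = hessA a n.+1.
  by apply/matrixP=> i j; rewrite !mxE /= /bump /=.
have -> : row' (lift ord0 ord0) (col' ord0 (hessA_top b n.+2))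
    = hessA_top (fun j => b j.+1) n.+1.
  by apply/matrixP=> -[[|i] ?] j; rewrite !mxE /= /bump /=.
rewrite IH [RHS]big_ord_recl !mxE /= subn0 expr0 expr1 !mul1r.
congr (_ + _); rewrite mulr_sumr; apply: eq_bigr => i _.
by rewrite /bump /= add1n subSS exprS !mulrA.
Qed.

Lemma det_hessA_recurrence n :
  \sum_(i < n.+1) (-1) ^+ i * sym_shift a i * \det (hessA a (n - i)) = (n == 0)%:R.
Proof.
case: n => [|n]; first by rewrite big_ord1 det_mx00 expr0 !mul1r.
rewrite big_ord_recl subn0 expr0 !mul1r -hessA_topE det_hessA_top.
apply/eqP; rewrite addr_eq0 -sumrN; apply/eqP/eq_bigr => i _.
by rewrite lift0 /= subSS exprS !mulNr !mul1r opprK.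
Qed.

Definition minors_poly N : {poly R} := \poly_(i < N) \det (hessA a i).
Definition alt_symbol_poly N : {poly R} := \poly_(i < N) ((-1) ^+ i * sym_shift a i).

Lemma take_alt_symbol_minors N :
  take_poly N (alt_symbol_poly N * minors_poly N) = take_poly N 1.
Proof.
apply/polyP=> i; rewrite !coef_take_poly; case: ltnP => // ltiN.
by rewrite coef_poly_mul // det_hessA_recurrence coef1.
Qed.

End HessenbergMinors.

Section DiagonalShift.
Variables (R : comNzRingType) (a : nat -> R) (lam : R).

Definition diag_shift (j : nat) : R := if j is 0 then a 0%N - lam else a j.

Lemma Dcoef_diag_shift j : Dcoef a lam j = \det (hessA diag_shift j).
Proof.
case: j => [|j] /=; first by rewrite det_mx00.
congr (\det _); apply/matrixP=> i l; rewrite !mxE.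
case: (eqVneq i l) => [->|neq_il]; first by rewrite leqnn subnn mulr1n.
rewrite mulr0n subr0; case: leqP => // le_il.
have : (0 < l - i)%N by rewrite subn_gt0 ltn_neqAle le_il andbT val_eqE.
by case: (l - i)%N.
Qed.

Lemma take_alt_symbol_diag_shift N :
  take_poly N (alt_symbol_poly diag_shift N) = take_poly N (alt_symbol_poly a N + lam *: 'X).
Proof.
apply/polyP=> i; rewrite !coef_take_poly; case: ltnP => // ltiN.
rewrite coefD coefZ coefX !coef_poly ltiN.
by case: i ltiN => [|[|i]] _ /=; rewrite ?expr0 ?expr1; ring.
Qed.

End DiagonalShift.

Section Symbol.
Variables (R : comNzRingType) (k : nat) (t : R).

Definition Qk : {poly R} := 1 + (1 - t) *: \sum_(1 <= j < k.+2) 'X ^+ j.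

Lemma coef_Qk i : Qk`_i = (i == 0)%:R + (1 - t) * ((0 < i < k.+2)%N)%:R.
Proof. by rewrite coefD coef1 coefZ coef_sum_Xn. Qed.

Lemma Qk_comp_polyNX : Qk \Po - 'X = 1 + (1 - t) *: \sum_(1 <= j < k.+2) (- 'X) ^+ j.
Proof.
rewrite comp_polyD comp_polyC comp_polyZ rmorph_sum /=.
by under eq_bigr do rewrite rmorphXn /= comp_polyX.
Qed.

Lemma char_denominatorE lam :
  1 + (lam - t) *: 'X + (lam * (1 - t)) *: \sum_(2 <= j < k.+3) 'X ^+ j
  = 1 - t *: 'X + lam *: ('X * Qk).
Proof.
apply/polyP=> i; rewrite !(coefD, coefB, coefN, coefZ, coef1, coefX, coefXM, coef_Qk, coef_sum_Xn).
by case: i => [|[|i]] /=; rewrite ?ltnS; ring.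
Qed.

Variables (a : nat -> R) (hdet : forall n, \det (hessA a n) = t ^+ (n - k.+1)).

Lemma take_minors_Qk N : take_poly N ((1 - t *: 'X) * minors_poly a N) = take_poly N Qk.
Proof.
apply/polyP=> i; rewrite !coef_take_poly; case: ltnP => // ltiN.
rewrite mulrBl mul1r coefB -scalerAl coefZ coefXM coef_Qk !coef_poly ltiN hdet.
case: i ltiN => [|i] ltiN /=; first by rewrite sub0n expr0; ring.
rewrite (ltnW ltiN) hdet add0r ltnS.
case: (leqP i k) => [le_ik|lt_ki].
  have /eqP-> : (i.+1 - k.+1 == 0)%N by rewrite subn_eq0.
  have /eqP-> : (i - k.+1 == 0)%N by rewrite subn_eq0 leqW.
  by rewrite ltnS le_ik expr0 /=; ring.
by rewrite subSn // exprS ltnNge lt_ki /=; ring.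
Qed.

Lemma take_alt_symbol_Qk N :
  take_poly N (alt_symbol_poly a N * Qk) = take_poly N (1 - t *: 'X).
Proof.
rewrite -take_polyMr -take_minors_Qk take_polyMr mulrCA.
by rewrite -take_polyMr take_alt_symbol_minors take_polyMr mulr1.
Qed.

Lemma cauchy_symbol n : cauchy (sym_shift a) (Qk \Po - 'X) n = (1 + t *: 'X)`_n.
Proof.
have sym_comp : \poly_(j < n.+1) sym_shift a j = alt_symbol_poly a n.+1 \Po - 'X.
  apply/polyP=> i; rewrite coef_comp_polyNX !coef_poly; case: ifP; rewrite ?mulr0 //.
  by rewrite mulrA -exprMn mulrNN mulr1 expr1n mul1r.
rewrite cauchy_coefM sym_comp -comp_polyM coef_comp_polyNX.
have := congr1 (fun p : {poly R} => p`_n) (take_alt_symbol_Qk n.+1).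
rewrite !coef_take_poly ltnSn /= => ->.
by rewrite -coef_comp_polyNX comp_polyB comp_polyC comp_polyZ comp_polyX scalerN opprK.
Qed.

Lemma cauchy_char_minors lam n :
  cauchy (Dcoef a lam) (1 - t *: 'X + lam *: ('X * Qk)) n = Qk`_n.
Proof.
set W := _ + _; set N := n.+1; set b := diag_shift a lam.
have take_W : take_poly N (alt_symbol_poly b N * Qk) = take_poly N W.
  rewrite -take_polyMl take_alt_symbol_diag_shift take_polyMl mulrDl take_polyD.
  by rewrite take_alt_symbol_Qk -take_polyD -scalerAl.
have : take_poly N (minors_poly b N * W) = take_poly N Qk.
  rewrite -take_polyMr -take_W take_polyMr mulrA [minors_poly b N * _]mulrC.
  by rewrite -take_polyMl take_alt_symbol_minors take_polyMl mul1r.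
move=> /(congr1 (fun p : {poly R} => p`_n)); rewrite !coef_take_poly ltnSn => <-.
by rewrite cauchy_coefM (@eq_poly _ _ _ _ (fun j _ => Dcoef_diag_shift a lam j)).
Qed.

End Symbol.

Theorem proposition1 (R : realFieldType) (k : nat) (t : R)
    (ht0 : 0 < t) (ht1 : t < 1) (a : nat -> R)
    (hminors : forall n : nat, (0 < n)%N ->
        \det (hessA a n) = t ^+ (n - k.+1)%N) :
  (forall n : nat,
     cauchy (sym_shift a)
       (1 + (1 - t) *: \sum_(1 <= j < k.+2) (- 'X) ^+ j) n
     = (1 + t *: 'X : {poly R})`_n)
  /\
  (forall (lam : R) (n : nat),
     cauchy (Dcoef a lam)
       (1 + (lam - t) *: 'X + (lam * (1 - t)) *: \sum_(2 <= j < k.+3) 'X ^+ j) n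
     = (1 + (1 - t) *: \sum_(1 <= j < k.+2) 'X ^+ j : {poly R})`_n).
Proof.
have hdet n : \det (hessA a n) = t ^+ (n - k.+1).
  by case: n => [|n]; [rewrite det_mx00 | exact: hminors].
split=> [n | lam n]; first by rewrite -Qk_comp_polyNX cauchy_symbol.
by rewrite char_denominatorE cauchy_char_minors.
Qed.
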